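(* Let $X$ be convex and let $f$ be $\alpha$-robustly quasiconvex for some $\alpha>0$, with $X\subset\operatorname{dom}f$. Then the set-valued map $\mathrm{Sol}(\cdot)$ is continuous (both upper and lower semicontinuous) at $0$ if and only if $\mathrm{Sol}(0)$ is a singleton and $X^\infty\cap\mathcal{K}_q(f)=\{0\}$.
   Context: Standing assumptions: $f:\mathbb{R}^n\to\mathbb{R}\cup\{\pm\infty\}$ is proper (never $-\infty$ and finite at some point) and lower semicontinuous; $X\subset\mathbb{R}^n$ is a nonempty closed set with $\operatorname{dom}f\cap X$ unbounded. $f$ is $\alpha$-robustly quasiconvex ($\alpha\ge0$) if $x\mapsto f(x)+\langle u,x\rangle$ is quasiconvex for every $u$ in the open ball $\mathbb{B}_\alpha$ of radius $\alpha$ about $0$ (quasiconvex: $g(\lambda x+(1-\lambda)y)\le\max\{g(x),g(y)\}$ for $x,y\in\operatorname{dom}g$, $\lambda\in[0,1]$). $X^\infty=\{u:\exists t_k\to+\infty,\ \exists x_k\in X,\ x_k/t_k\to u\}$. $f^\infty_q(u)=\sup_{x\in\operatorname{dom}f}\sup_{t>0}\frac{f(x+tu)-f(x)}{t}$, $\mathcal{K}_q(f)=\{d: f^\infty_q(d)\le0\}$. $f_u(x)=f(x)-\langle u,x\rangle$, $\mathrm{Sol}(u)=\{x\in X: f_u(x)\le f_u(y)\ \forall y\in X\}$. $F$ is upper semicontinuous at $\bar u$ if for every open $V\supset F(\bar u)$ there is a neighborhood $U$ of $\bar u$ with $F(u)\subset V$ for $u\in U$; lower semicontinuous at $\bar u$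 if $F(\bar u)\neq\emptyset$ and for every open $V$ meeting $F(\bar u)$ there is a neighborhood $U$ of $\bar u$ with $F(u)\cap V\ne\emptyset$ for $u\in U$. *)

(* Vectors of R^n are row vectors 'rV[R]_n,
   with the product topology of mathcomp-analysis (matrix_topology). *)
From HB Require Import structures.
From mathcomp Require Import all_boot all_order all_algebra.
From mathcomp Require Import all_classical all_reals all_analysis.
Set Implicit Arguments. Unset Strict Implicit. Unset Printing Implicit Defensive.
Import Order.TTheory GRing.Theory Num.Theory.
Import numFieldNormedType.Exports.
Local Open Scope classical_set_scope.
Local Open Scope ring_scope.

Section Defs.
Context {R : realType} {n : nat}.
Local Notation vec := 'rV[R]_n.

Definition dotv (u x : vec) : R := \sum_(i < n) u ord0 i * x ord0 i.
Definition enorm (x : vec) : R := Num.sqrt (dotv x x).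

Definition edom (f : vec -> \bar R) : set vec := [set x | (f x < +oo)%E].

Definition proper_fun (f : vec -> \bar R) : Prop :=
  (forall x, f x != -oo%E) /\ (exists x, f x \is a fin_num).

Definition bounded_setE (A : set vec) : Prop :=
  exists M : R, forall x, A x -> enorm x <= M.

Definition convexE (A : set vec) : Prop :=
  forall x y (l : R), A x -> A y -> 0 <= l <= 1 -> A (l *: x + (1 - l) *: y).

Definition quasiconvexE (g : vec -> \bar R) : Prop :=
  forall x y (l : R), edom g x -> edom g y -> 0 <= l <= 1 ->
    (g (l *: x + (1 - l) *: y)%R <= maxe (g x) (g y))%E.

Definition robustly_quasiconvex (alpha : R) (f : vec -> \bar R) : Prop :=
  forall u : vec, enorm u < alpha ->
    quasiconvexE (fun x => (f x + (dotv u x)%:E)%E).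

Definition asymptotic_cone (X : set vec) : set vec :=
  [set u | exists (t : nat -> R) (x : nat -> vec),
     t @ \oo --> +oo /\ (forall k, X (x k)) /\
     (fun k => (t k)^-1 *: x k) @ \oo --> u].

Definition fq_inf (f : vec -> \bar R) (u : vec) : \bar R :=
  ereal_sup [set r | exists (x : vec) (t : R), edom f x /\ 0 < t /\
              r = ((f (x + t *: u)%R - f x) * (t^-1)%:E)%E].

Definition Kq (f : vec -> \bar R) : set vec := [set d | (fq_inf f d <= 0)%E].

Definition f_shift (f : vec -> \bar R) (u : vec) (x : vec) : \bar R :=
  (f x - (dotv u x)%:E)%E.

Definition Sol (f : vec -> \bar R) (X : set vec) (u : vec) : set vec :=
  [set x | X x /\ forall y, X y -> (f_shift f u x <= f_shift f u y)%E].

Definition usc_map (F : vec -> set vec) (ub : vec) : Prop :=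
  forall V : set vec, open V -> F ub `<=` V ->
    exists2 U, nbhs ub U & forall u, U u -> F u `<=` V.

Definition lsc_map (F : vec -> set vec) (ub : vec) : Prop :=
  F ub !=set0 /\
  forall V : set vec, open V -> F ub `&` V !=set0 ->
    exists2 U, nbhs ub U & forall u, U u -> F u `&` V !=set0.

End Defs.

(* If Sol is lower semicontinuous at 0, each point of Sol(0) is approached by
   solutions of the problems tilted by small multiples s d of any vector d.
   Tilting towards a second minimizer b <> x0 leaves no solution near x0, so
   Sol(0) is a singleton; and for a nonzero d in X^oo /\ K_q(f) the tilted
   objective is unbounded below on the ray x0 + R_+ d, which lies in X, so the
   tilted problems have no solution at all.

   Conversely, if Sol(0) = {x0} and X^oo /\ K_q(f) = {0}, the sublevel sets
   {y in X | f_u(y) <= f_u(x0)} are bounded uniformly for small u: otherwise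
   the normalised escaping points cluster at a unit direction d in X^oo, and
   robust quasiconvexity of f tilted by -beta d, together with lower
   semicontinuity, puts d in K_q(f). Uniform boundedness yields solutions for
   small u by compactness, and upper semicontinuity because cluster points of
   perturbed solutions solve the unperturbed problem; for a singleton Sol(0)
   these two facts give lower semicontinuity. *)

From HB Require Import structures.
From mathcomp Require Import all_boot all_order all_algebra.
From mathcomp Require Import all_classical all_reals all_analysis.
From mathcomp Require Import lra.
Import Order.TTheory GRing.Theory Num.Theory.
Import numFieldNormedType.Exports.
Local Open Scope classical_set_scope.
Local Open Scope ring_scope.

Section inner_product.
Context {R : realType} {n : nat}.
Local Notation vec := 'rV[R]_n.
Implicit Types (u x y d : vec).

Lemma normr_coord_le x i : `|x ord0 i| <= `|x|.
Proof.
have /mapP[j _ ->] : `|x ord0 i| \in [seq `|x k.1 k.2| | k : 'I_1 * 'I_n].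
  by apply/mapP; exists (ord0, i) => //=; rewrite mem_enum.
by rewrite [leRHS]/Num.norm /= mx_normrE; apply/bigmax_geP; right => /=; exists j.
Qed.

Lemma dotvDr u x y : dotv u (x + y) = dotv u x + dotv u y.
Proof. by rewrite /dotv -big_split /=; apply: eq_bigr => i _; rewrite mxE mulrDr. Qed.

Lemma dotvZr (a : R) u x : dotv u (a *: x) = a * dotv u x.
Proof. by rewrite /dotv mulr_sumr; apply: eq_bigr => i _; rewrite mxE mulrCA. Qed.

Lemma dotvZl (a : R) u x : dotv (a *: u) x = a * dotv u x.
Proof. by rewrite /dotv mulr_sumr; apply: eq_bigr => i _; rewrite mxE mulrA. Qed.

Lemma dotvBr u x y : dotv u (x - y) = dotv u x - dotv u y.
Proof. by rewrite dotvDr -scaleN1r dotvZr mulN1r. Qed.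

Lemma dotv0l x : dotv 0 x = 0.
Proof. by rewrite -(scale0r 0) dotvZl mul0r. Qed.

Lemma normr_dotv_le u x : `|dotv u x| <= n%:R * (`|u| * `|x|).
Proof.
rewrite (le_trans (ler_norm_sum _ _ _)) // mulr_natl.
rewrite -[X in _ *+ X]card_ord -sumr_const.
by apply: ler_sum => i _; rewrite normrM ler_pM ?normr_coord_le.
Qed.

Lemma dotv_self_gt0 x : x != 0 -> 0 < dotv x x.
Proof.
move=> x0; rewrite lt0r sumr_ge0 ?andbT => [|i _]; last by rewrite -expr2 sqr_ge0.
apply: contra x0; rewrite psumr_eq0 => [/allP x0|i _]; last by rewrite -expr2 sqr_ge0.
apply/eqP/rowP => i; apply/eqP; rewrite mxE -sqrf_eq0 expr2.
exact: x0 (mem_index_enum _).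
Qed.

Lemma enorm_le x : enorm x <= n%:R * `|x|.
Proof.
have x_ge0 : 0 <= n%:R * `|x| by rewrite mulr_ge0.
rewrite -(ger0_norm x_ge0) -sqrtr_sqr ler_sqrt ?sqr_ge0 //.
rewrite exprMn [n%:R ^+ 2]expr2 -mulrA mulr_natl.
rewrite -[X in _ *+ X]card_ord -sumr_const; apply: ler_sum => i _.
have n_ge1 : 1 <= n%:R :> R by rewrite ler1n (leq_ltn_trans (leq0n i)).
rewrite -expr2 -real_normK ?num_real // (le_trans _ (ler_peMl _ n_ge1)) ?sqr_ge0 //.
by rewrite lerXn2r ?nnegrE ?normr_coord_le.
Qed.

Lemma dotv_continuous d : continuous (dotv d).
Proof.
move=> x; apply/(@cvgrPdist_lt _ _ _ (nbhs x)) => e e_gt0.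
have k_gt0 : 0 < n%:R * `|d| + 1 by rewrite ltr_wpDl ?mulr_ge0.
near=> y.
have xy_small : `|x - y| < e / (n%:R * `|d| + 1).
  by near: y; apply: (@cvgr_dist_lt _ _ _ (nbhs x) _ id x cvg_id); rewrite divr_gt0.
rewrite -(dotvBr d x y) (le_lt_trans (normr_dotv_le _ _)) // mulrA.
rewrite (le_lt_trans (ler_wpM2l _ (ltW xy_small))) ?mulr_ge0 //.
by rewrite mulrA ltr_pdivrMr //; nra.
Unshelve. all: by end_near.
Qed.

End inner_product.

Section topology.
Context {R : realType}.

Lemma lte_EFin_between {x y : \bar R} : (x < y)%E -> exists r : R, (x < r%:E < y)%E.
Proof.
case: x => [a||]; case: y => [b||] //= ab.
- by exists ((a + b) / 2); rewrite !lte_fin !midf_lt // -lte_fin.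
- by exists (a + 1); rewrite lte_fin ltry ltrDl ltr01.
- by exists (b - 1); rewrite ltNyr lte_fin gtrDl oppr_lt0 ltr01.
- by exists 0; rewrite ltNyr ltry.
Qed.

Lemma compact_directed_cluster {T : topologicalType} {K : set T} {I : set R}
    {D : R -> set T} :
  compact K -> I !=set0 -> (forall i j, I i -> I j -> I (Num.min i j)) ->
  (forall i j, I i -> I j -> i <= j -> D i `<=` D j) ->
  (forall i, I i -> D i !=set0) -> (forall i, I i -> D i `<=` K) ->
  exists2 x, K x & forall i B, I i -> nbhs x B -> D i `&` B !=set0.
Proof.
move=> cK [i0 Ii0] Imin Dmono Dne DK.
have FD : ProperFilter (filter_from I D).
  apply: filter_from_proper => //; apply: filter_from_filter; first by exists i0.
  move=> i j Ii Ij; exists (Num.min i j); first exact: Imin.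
  by move=> x Dx; split; apply: (Dmono _ _ (Imin _ _ Ii Ij)) Dx;
    rewrite ?ge_min ?lexx ?orbT.
have [x [Kx clx]] := cK _ FD (ex_intro2 _ _ i0 Ii0 (DK i0 Ii0)).
by exists x => // i B Ii xB; apply: clx => //; exists i.
Qed.

Lemma compact_directed_cluster_gt0 {T : topologicalType} {K : set T}
    {D : R -> set T} :
  compact K -> (forall i j, 0 < i -> 0 < j -> i <= j -> D i `<=` D j) ->
  (forall i, 0 < i -> D i !=set0) -> (forall i, 0 < i -> D i `<=` K) ->
  exists2 x, K x & forall i B, 0 < i -> nbhs x B -> D i `&` B !=set0.
Proof.
move=> cK; apply: (compact_directed_cluster cK (ex_intro _ 1 ltr01)).
by move=> i j /= i_gt0 j_gt0; rewrite lt_min i_gt0.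
Qed.

Lemma lower_semicontinuous_closed_le {T : topologicalType} (g : T -> \bar R) (c : R) :
  lower_semicontinuous g -> closed [set x | (g x <= c%:E)%E].
Proof.
move=> /lower_semicontinuousP /(_ c) /open_closedC.
by congr closed; apply/seteqP; split => x /=; rewrite leNgt => /negP.
Qed.

Lemma lower_semicontinuousD_continuous {T : topologicalType} (f : T -> \bar R)
    (g : T -> R) :
  lower_semicontinuous f -> continuous g ->
  lower_semicontinuous (fun x => f x + (g x)%:E)%E.
Proof.
move=> lsc_f cont_g x a; rewrite -lte_subel_addr // -EFinB => afx.
have [b /andP[ab bfx]] := lte_EFin_between afx.
rewrite lte_fin in ab.
have [V Vx Vb] := lsc_f x b bfx.
have gx_near : \forall y \near x, g x - (b - (a - g x)) < g y.
  by apply: (cvgr_gt _ (cont_g x)); rewrite gtrBl subr_gt0.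
exists (V `&` [set y | g x - (b - (a - g x)) < g y]); first exact: filterI.
move=> y [/Vb bfy /= gy]; rewrite -lte_subel_addr // -EFinB (lt_trans _ bfy) //.
by rewrite lte_fin; lra.
Qed.

Lemma lower_semicontinuous_compact_argmin {T : topologicalType} {g : T -> \bar R}
    {K : set T} :
  compact K -> K !=set0 -> lower_semicontinuous g ->
  exists2 x, K x & forall y, K y -> (g x <= g y)%E.
Proof.
move=> cK [x0 Kx0] lsc_g; pose m := ereal_inf (g @` K).
have m_lb y : K y -> (m <= g y)%E by move=> Ky; apply: ereal_inf_lbound; exists y.
have [m_inf|] := eqVneq m +oo%E.
  exists x0 => // y Ky; move: (m_lb y Ky).
  by rewrite m_inf leye_eq => /eqP ->; exact: leey.
rewrite -ltey => /lte_EFin_between[a0 /andP[ma0 _]].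
pose I := [set a : R | (m < a%:E)%E].
pose D a := [set z | K z /\ (g z < a%:E)%E].
have Imin i j : I i -> I j -> I (Num.min i j).
  by rewrite /I /= EFin_min lt_min => -> ->.
have Dmono i j : I i -> I j -> i <= j -> D i `<=` D j.
  by move=> _ _ ij z [Kz gz]; split; rewrite // (lt_le_trans gz) ?lee_fin.
have Dne i : I i -> D i !=set0 by move=> /ereal_inf_lt[_ [z Kz <-] gz]; exists z.
have [x Kx clx] := compact_directed_cluster cK (ex_intro _ a0 ma0) Imin Dmono Dne
  (fun _ _ _ => @proj1 _ _).
exists x => // y Ky; rewrite leNgt; apply/negP => /(le_lt_trans (m_lb y Ky)).
move=> /lte_EFin_between[a /andP[ma agx]].
have [B Bx Ba] := lsc_g x a agx.
have [z [[_ gz] /Ba]] := clx a B ma Bx.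
by rewrite ltNge (ltW gz).
Qed.

Lemma nbhs0_scale_pos {V : normedModType R} {U : set V} (d : V) :
  nbhs 0 U -> exists2 s : R, 0 < s & U (s *: d).
Proof.
move=> /nbhs_normP[e /= e_gt0 eU]; have k_gt0 : 0 < `|d| + 1 by rewrite ltr_wpDl.
exists (e / 2 / (`|d| + 1)); first by rewrite !divr_gt0.
apply: eU => /=; rewrite sub0r normrN normrZ gtr0_norm ?divr_gt0 //.
by rewrite mulrAC ltr_pdivrMr //; nra.
Qed.

End topology.

Section asymptotics.
Context {R : realType} {V : normedModType R}.

Lemma cvgryV0 (ts : nat -> R) :
  ts @ \oo --> +oo -> (fun k => (ts k)^-1) @ \oo --> 0.
Proof. by move=> ts_oo; apply/gtr0_cvgV0 => //; exact: cvgry_gt. Qed.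

Lemma near_ratio_itv01 (ts : nat -> R) (t : R) :
  ts @ \oo --> +oo -> 0 <= t -> \forall k \near \oo, 0 <= t / ts k <= 1.
Proof.
move=> /cvgryPge ts_oo t_ge0; near=> k.
have tk : Num.max t 1 <= ts k by near: k; exact: ts_oo.
have tsk_gt0 : 0 < ts k by apply: lt_le_trans tk; rewrite lt_max ltr01 orbT.
rewrite divr_ge0 ?(ltW tsk_gt0) //= ler_pdivrMr // mul1r.
by rewrite (le_trans _ tk) ?le_max ?lexx.
Unshelve. all: by end_near.
Qed.

Lemma cvg_convex_comb_direction (x : V) (t : R) {ts : nat -> R} {xs : nat -> V}
    {d : V} :
  ts @ \oo --> +oo -> (fun k => (ts k)^-1 *: xs k) @ \oo --> d ->
  (fun k => (t / ts k) *: xs k + (1 - t / ts k) *: x) @ \oo --> x + t *: d.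
Proof.
move=> ts_oo xsd; rewrite addrC.
have -> : (fun k => (t / ts k) *: xs k + (1 - t / ts k) *: x) =
    (fun k => t *: ((ts k)^-1 *: xs k) + (1 - t * (ts k)^-1) *: x).
  by apply/funext => k; rewrite scalerA.
apply: cvgD; first exact: cvgZr.
rewrite -[X in _ --> X]scale1r -[X in X *: x](subr0 1) -(mulr0 t).
by apply: cvgZl; apply: cvgB; [exact: cvg_cst | apply: cvgMr; exact: cvgryV0].
Qed.

Lemma closed_normr_le (M : R) : closed [set y : V | `|y| <= M].
Proof.
rewrite -[X in closed X]/((fun y : V => `|y|) @^-1` [set r | r <= M]).
by apply: preimage_closed; [move=> y _; exact: norm_continuous | exact: closed_le].
Qed.

Lemma closed_normr_eq (M : R) : closed [set y : V | `|y| = M].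
Proof.
rewrite -[X in closed X]/((fun y : V => `|y|) @^-1` [set r | r = M]).
by apply: preimage_closed; [move=> y _; exact: norm_continuous | exact: closed_eq].
Qed.

Lemma normr_le_bounded_set {A : set V} (M : R) :
  A `<=` [set y | `|y| <= M] -> bounded_set A.
Proof.
move=> AM; exists M; split; first exact: num_real.
by move=> N MN y /AM /= yM; exact: le_trans yM (ltW MN).
Qed.

Lemma cvg_harmonic_bound (a : nat -> V) (l : V) :
  (forall k, `|l - a k| < harmonic k) -> a @ \oo --> l.
Proof.
move=> al; apply/cvgrPdist_lt => e e_gt0.
apply: filterS (cvgr0_norm_lt _ cvg_harmonic _ e_gt0) => k.
by move=> /(le_lt_trans (ler_norm _)); exact: lt_trans (al k).
Qed.

End asymptotics.

Section proper_functions.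
Context {R : realType} {n : nat}.
Local Notation vec := 'rV[R]_n.
Implicit Types (f : vec -> \bar R) (X : set vec) (u x d : vec).

Lemma edom_fineK {f x} : proper_fun f -> edom f x -> f x = (fine (f x))%:E.
Proof. by move=> [fNy _] fx; rewrite fineK // fin_numE fNy -ltey. Qed.

Lemma f_shift_fineK {f x} u : proper_fun f -> edom f x ->
  f_shift f u x = (fine (f x) - dotv u x)%:E.
Proof. by move=> fP fx; rewrite /f_shift (edom_fineK fP fx). Qed.

Lemma f_shift0 f x : f_shift f 0 x = f x.
Proof. by rewrite /f_shift dotv0l sube0. Qed.

Lemma lower_semicontinuous_f_shift {f} u :
  lower_semicontinuous f -> lower_semicontinuous (f_shift f u).
Proof.
move=> lsc_f.
apply: (@lower_semicontinuousD_continuous _ _ f (fun x => - dotv u x)) => //.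
by move=> x; exact: continuousN (dotv_continuous u x).
Qed.

Lemma KqP f d : proper_fun f ->
  Kq f d <-> forall x (t : R), edom f x -> 0 < t -> (f (x + t *: d)%R <= f x)%E.
Proof.
have slope_le0 (y : \bar R) (a t : R) : 0 < t ->
    ((y - a%:E) * (t^-1)%:E <= 0)%E = (y <= a%:E)%E.
  by move=> t_gt0; rewrite pmule_lle0 ?lte_fin ?invr_gt0 // sube_le0.
move=> fP; split => [Kd x t fx t_gt0 | decr].
  rewrite [leRHS](edom_fineK fP fx) -(slope_le0 _ _ _ t_gt0) -(edom_fineK fP fx).
  by apply: le_trans Kd; apply: ereal_sup_ubound; exists x, t.
apply: ge_ereal_sup => _ [x [t [fx [t_gt0 ->]]]].
by rewrite [X in (_ - X)%E](edom_fineK fP fx) slope_le0 // -(edom_fineK fP fx) decr.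
Qed.

Lemma asymptotic_cone0 X x : X x -> asymptotic_cone X 0.
Proof.
move=> Xx; exists (fun k => k%:R), (fun=> x); split; [exact: cvgr_idn | split => //].
by rewrite -(scale0r x); apply: cvgZl; exact: cvgryV0 cvgr_idn.
Qed.

Lemma asymptotic_cone_recession {X x d} {t : R} : closed X -> convexE X -> X x ->
  asymptotic_cone X d -> 0 <= t -> X (x + t *: d).
Proof.
move=> cX cvX Xx [ts [xs [ts_oo [Xxs xsd]]]] t_ge0.
apply: (closed_cvg X cX _ _ (cvg_convex_comb_direction x t ts_oo xsd)).
near=> k; apply: cvX => //; near: k; exact: near_ratio_itv01.
Unshelve. all: by end_near.
Qed.

End proper_functions.

Section escaping_sublevels.
Context {R : realType} {n : nat}.
Local Notation vec := 'rV[R]_n.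
Implicit Types (f g : vec -> \bar R) (v x d : vec).

Lemma quasiconvex_lsc_recession {g x d} {t : R} {ts : nat -> R} {ys : nat -> vec} :
  quasiconvexE g -> lower_semicontinuous g -> edom g x -> (forall k, edom g (ys k)) ->
  ts @ \oo --> +oo -> (fun k => (ts k)^-1 *: ys k) @ \oo --> d ->
  (\forall k \near \oo, g (ys k) <= g x)%E -> 0 <= t ->
  (g (x + t *: d)%R <= g x)%E.
Proof.
move=> qc_g lsc_g gx gys ts_oo ysd ys_below t_ge0.
rewrite leNgt; apply/negP => /lte_EFin_between[a /andP[gxa agd]].
have [V Vd Va] := lsc_g _ _ agd.
have p_cvg := cvg_convex_comb_direction x t ts_oo ysd.
near \oo => k.
have /Va : V ((t / ts k) *: ys k + (1 - t / ts k) *: x) by near: k; exact: p_cvg.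
apply/negP; rewrite -leNgt.
apply: le_trans (qc_g _ _ _ (gys k) gx _) _; first by near: k; exact: near_ratio_itv01.
by rewrite ge_max (ltW gxa) andbT (le_trans _ (ltW gxa)) //; near: k.
Unshelve. all: by end_near.
Qed.

Lemma sublevel_escape_Ny {f x0 v d} {us ys : nat -> vec} (c : R) :
  proper_fun f -> edom f x0 -> (forall k, edom f (ys k)) ->
  us @ \oo --> (0 : vec) -> (fun k => `|ys k|) @ \oo --> +oo ->
  (fun k => `|ys k|^-1 *: ys k) @ \oo --> d ->
  (forall k, (f_shift f (us k) (ys k) <= f_shift f (us k) x0)%E) ->
  dotv v d < 0 ->
  \forall k \near \oo, (f (ys k) + (dotv v (ys k))%:E <= c%:E)%E.
Proof.
move=> fP fx0 fys us0 ys_oo ysd ys_sub vd_lt0.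
pose D := - dotv v d; have D_gt0 : 0 < D by rewrite oppr_gt0.
pose zs k := `|ys k|^-1 *: ys k.
have vzs_cvg : (fun k => dotv v (zs k)) @ \oo --> dotv v d.
  exact: continuous_cvg (dotv_continuous v d) ysd.
near=> k.
have ys_gt0 : 0 < `|ys k| by near: k; exact: cvgry_gt.
have ysE : ys k = `|ys k| *: zs k by rewrite /zs scalerA mulfV ?scale1r ?gt_eqF.
have zs_norm : `|zs k| = 1 by rewrite /zs normrZ normfV normr_id mulVf ?gt_eqF.
have us_lt1 : `|us k| < 1 by near: k; exact: cvgr0_norm_lt.
have us_small : `|us k| < D / 4 / (n%:R + 1).
  by near: k; apply: cvgr0_norm_lt; rewrite ?divr_gt0 ?ltr_wpDl.
have vzs_lt : dotv v (zs k) < - D / 2.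
  by near: k; apply: (cvgr_lt _ vzs_cvg); rewrite -[dotv v d]opprK -/D; lra.
have ys_large : fine (f x0) + n%:R * `|x0| - c <= `|ys k| * (D / 4).
  rewrite -ler_pdivrMr ?divr_gt0 //; near: k.
  by move/cvgryPge: ys_oo; apply.
have us_zs : `|ys k| * dotv (us k) (zs k) <= `|ys k| * (D / 4).
  rewrite ler_pM2l // (le_trans (ler_norm _)) // (le_trans (normr_dotv_le _ _)) //.
  rewrite zs_norm mulr1; rewrite ltr_pdivlMr ?ltr_wpDl // in us_small.
  by have := normr_ge0 (us k); nra.
have v_zs : `|ys k| * dotv v (zs k) <= `|ys k| * (- D / 2) by rewrite ler_pM2l // ltW.
have us_x0 : - dotv (us k) x0 <= n%:R * `|x0|.
  rewrite (le_trans (ler_norm _)) // normrN (le_trans (normr_dotv_le _ _)) //.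
  by rewrite ler_wpM2l // ler_piMl // ltW.
have us_ys : dotv (us k) (ys k) = `|ys k| * dotv (us k) (zs k).
  by rewrite {1}ysE dotvZr.
have v_ys : dotv v (ys k) = `|ys k| * dotv v (zs k) by rewrite {1}ysE dotvZr.
rewrite (edom_fineK fP (fys k)) -EFinD lee_fin v_ys.
by have := ys_sub k; rewrite !f_shift_fineK // lee_fin us_ys; lra.
Unshelve. all: by end_near.
Qed.

Lemma escaping_direction_Kq {f alpha x0 d} {us ys : nat -> vec} :
  proper_fun f -> lower_semicontinuous f -> robustly_quasiconvex alpha f ->
  0 < alpha -> edom f x0 -> (forall k, edom f (ys k)) ->
  us @ \oo --> (0 : vec) -> (fun k => `|ys k|) @ \oo --> +oo ->
  (fun k => `|ys k|^-1 *: ys k) @ \oo --> d ->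
  (forall k, (f_shift f (us k) (ys k) <= f_shift f (us k) x0)%E) ->
  d != 0 -> Kq f d.
Proof.
move=> fP lsc_f rqc_f alpha_gt0 fx0 fys us0 ys_oo ysd ys_sub d_neq0.
apply/KqP => // x t fx t_gt0; apply/lee_addgt0Pr => e e_gt0.
have D_gt0 := dotv_self_gt0 _ d_neq0.
have k_gt0 : 0 < n%:R * `|d| + 1 by rewrite ltr_wpDl ?mulr_ge0.
(* Tilting f by [- beta d] keeps it quasiconvex and makes it tend to -oo along
   [ys]; quasiconvexity then gives [f (x + t d) <= f x + beta t |d|^2]. *)
pose beta := Num.min (alpha / (n%:R * `|d| + 1)) (e / (t * dotv d d)).
have beta_gt0 : 0 < beta by rewrite lt_min !divr_gt0 ?mulr_gt0.
pose w := (- beta) *: d; pose g y := (f y + (dotv w y)%:E)%E.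
have g_edom y : edom f y -> edom g y by move=> fy; apply: lte_add_pinfty; rewrite ?ltry.
have qc_g : quasiconvexE g.
  apply: rqc_f; rewrite (le_lt_trans (enorm_le _)) // normrZ normrN gtr0_norm //.
  have : beta * (n%:R * `|d| + 1) <= alpha by rewrite -ler_pdivlMr ?ge_min ?lexx.
  by nra.
have lsc_g : lower_semicontinuous g.
  exact: lower_semicontinuousD_continuous lsc_f (dotv_continuous w).
have wd_lt0 : dotv w d < 0 by rewrite dotvZl mulNr oppr_lt0 mulr_gt0.
have ys_below : \forall k \near \oo, (g (ys k) <= g x)%E.
  rewrite /g (edom_fineK fP fx) -EFinD.
  exact: (sublevel_escape_Ny _ fP fx0 fys us0 ys_oo ysd ys_sub wd_lt0).
have := quasiconvex_lsc_recession qc_g lsc_g (g_edom _ fx) (fun k => g_edom _ (fys k))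
  ys_oo ysd ys_below (ltW t_gt0).
rewrite /g (edom_fineK fP fx) -EFinD dotvDr dotvZr -lee_suber_addr // -EFinB.
move=> /le_trans; apply; rewrite -EFinD lee_fin /w !dotvZl.
have : beta <= e / (t * dotv d d) by rewrite ge_min lexx orbT.
by rewrite ler_pdivlMr ?mulr_gt0 //; lra.
Qed.

End escaping_sublevels.

Section solution_map.
Context {R : realType} {n : nat}.
Local Notation vec := 'rV[R]_n.
Implicit Types (f : vec -> \bar R) (X : set vec) (u x d : vec).

Lemma open_dotv_lt d (c : R) : open [set y : vec | dotv d y < c].
Proof. exact: (continuousP _).1 (dotv_continuous d) _ (@open_lt _ c). Qed.

Lemma lsc_Sol0_singleton f X x0 : proper_fun f -> X `<=` edom f ->
  lsc_map (Sol f X) 0 -> Sol f X 0 x0 -> Sol f X 0 = [set x0].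
Proof.
move=> fP Xf [_ lsc_Sol] Sx0; apply/seteqP; split => [b Sb|_ ->] //=.
apply: contrapT => b_neq_x0; pose d := b - x0.
have D_gt0 : 0 < dotv d d by apply: dotv_self_gt0; rewrite subr_eq0; exact/eqP.
have Vx0 : dotv d x0 < dotv d b by rewrite -subr_gt0 -dotvBr.
have [U U0 UV] := lsc_Sol _ (open_dotv_lt d (dotv d b)) (ex_intro _ x0 (conj Sx0 Vx0)).
have [s s_gt0 Us] := nbhs0_scale_pos d U0.
have [x [[Xx x_min] /= Vx]] := UV _ Us.
have := proj2 Sb x Xx; have := x_min b (proj1 Sb).
have fx := Xf _ Xx; have fb := Xf _ (proj1 Sb).
rewrite !f_shift_fineK // !lee_fin !dotvZl !dotv0l.
have : s * dotv d x < s * dotv d b by rewrite ltr_pM2l.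
lra.
Qed.

Lemma lsc_Sol_cone f X x0 : proper_fun f -> closed X -> convexE X -> X `<=` edom f ->
  lsc_map (Sol f X) 0 -> Sol f X 0 x0 -> asymptotic_cone X `&` Kq f = [set 0].
Proof.
move=> fP cX cvX Xf [_ lsc_Sol] [Xx0 x0_min].
apply/seteqP; split => [d [Cd Kd]|_ ->]; last first.
  split; first exact: asymptotic_cone0 Xx0.
  by apply/KqP => // x t _ _; rewrite scaler0 addr0.
apply: contrapT => /eqP d_neq0; have D_gt0 := dotv_self_gt0 _ d_neq0.
have [U U0 UV] := lsc_Sol setT openT (ex_intro _ x0 (conj (conj Xx0 x0_min) I)).
have [s s_gt0 Us] := nbhs0_scale_pos d U0.
have [x [[Xx x_min] _]] := UV _ Us.
(* Along the ray [x0 + t d] the tilted objective drops by at least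
   [s t |d|^2], eventually below its value at the tilted minimizer [x]. *)
pose A := fine (f x0) - s * dotv d x0; pose r := fine (f x) - s * dotv d x.
pose t := (`|A - r| + 1) / (s * dotv d d).
have t_gt0 : 0 < t by rewrite divr_gt0 ?mulr_gt0 ?ltr_wpDl.
have Xy := asymptotic_cone_recession cX cvX Xx0 Cd (ltW t_gt0).
have := (KqP _ _ fP).1 Kd x0 t (Xf _ Xx0) t_gt0; have := x_min _ Xy.
have fx := Xf _ Xx; have fy := Xf _ Xy; have fx0 := Xf _ Xx0.
rewrite !f_shift_fineK // (edom_fineK fP fy) (edom_fineK fP fx0).
rewrite !lee_fin !dotvZl dotvDr dotvZr.
have stD : s * (t * dotv d d) = `|A - r| + 1.
  by rewrite /t mulrCA divfK ?gt_eqF ?mulr_gt0.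
have := ler_norm (A - r); rewrite /A /r in stD *; nra.
Qed.

Lemma unbounded_sublevels_escape f X x0 :
  ~ (exists2 delta : R, 0 < delta & exists M : R, forall u y, `|u| < delta -> X y ->
      (f_shift f u y <= f_shift f u x0)%E -> `|y| <= M) ->
  exists d (us ys : nat -> vec), [/\ d != 0, us @ \oo --> (0 : vec),
    (fun k => `|ys k|) @ \oo --> +oo, (fun k => `|ys k|^-1 *: ys k) @ \oo --> d &
    forall k, X (ys k) /\ (f_shift f (us k) (ys k) <= f_shift f (us k) x0)%E].
Proof.
move=> unbounded.
pose P e u y := [/\ `|u| < e, X y, (f_shift f u y <= f_shift f u x0)%E & e^-1 < `|y|].
have P_ex e : 0 < e -> exists u y, P e u y.
  move=> e_gt0; apply: contrapT => noP; apply: unbounded; exists e => //.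
  exists e^-1 => u y ue Xy y_sub; rewrite leNgt; apply/negP => ey.
  by apply: noP; exists u, y.
pose D e := [set `|y|^-1 *: y | y in [set y | exists u, P e u y]].
pose S := [set z : vec | `|z| = 1].
have cS : compact S.
  apply: bounded_closed_compact; last exact: closed_normr_eq.
  by apply: (normr_le_bounded_set 1) => z /= ->.
have Dmono (i j : R) : 0 < i -> 0 < j -> i <= j -> D i `<=` D j.
  move=> i_gt0 j_gt0 ij _ [y [u [ui Xy y_sub iy]] <-]; exists y => //; exists u.
  by split => //; [exact: lt_le_trans ui ij | rewrite (le_lt_trans _ iy) // lef_pV2].
have Dne (i : R) : 0 < i -> D i !=set0.
  by move=> /P_ex[u [y Py]]; exists (`|y|^-1 *: y); exists y => //; exists u.
have DS (i : R) : 0 < i -> D i `<=` S.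
  move=> i_gt0 _ [y [u [_ _ _ iy]] <-].
  have y_gt0 : 0 < `|y| by apply: lt_trans iy; rewrite invr_gt0.
  by rewrite /S /= normrZ normfV normr_id mulVf ?gt_eqF.
have [d Sd clu] := compact_directed_cluster_gt0 cS Dmono Dne DS.
have near_d k : exists uy : vec * vec,
    P (harmonic k) uy.1 uy.2 /\ `|d - `|uy.2|^-1 *: uy.2| < harmonic k.
  have hk : 0 < harmonic k :> R := harmonic_gt0 k.
  have [_ [[y [u Py] <-] dy]] := clu _ _ hk (nbhsx_ballx d _ hk).
  by exists (u, y); split => //; rewrite -ball_normE in dy.
have [uy uyP] := choice near_d.
exists d, (fun k => (uy k).1), (fun k => (uy k).2); split.
- by apply/eqP => d0; move: Sd; rewrite /S /= d0 normr0 => /esym/eqP; rewrite oner_eq0.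
- by apply: cvg_harmonic_bound => k; rewrite sub0r normrN; case: (uyP k) => -[].
- apply/cvgryPge => M; apply: filterS (nbhs_infty_ger M) => k kM.
  case: (uyP k) => -[_ _ _ ky] _; rewrite /= invrK in ky.
  by rewrite (le_trans kM) // (le_trans _ (ltW ky)) // ler_nat.
- by apply: cvg_harmonic_bound => k; case: (uyP k).
- by move=> k; case: (uyP k) => -[].
Qed.

Lemma uniform_sublevel_bound {f X} {alpha : R} {x0} :
  proper_fun f -> lower_semicontinuous f -> robustly_quasiconvex alpha f -> 0 < alpha ->
  X `<=` edom f -> X x0 -> asymptotic_cone X `&` Kq f = [set 0] ->
  exists2 delta : R, 0 < delta & exists M : R, forall u y, `|u| < delta -> X y ->
    (f_shift f u y <= f_shift f u x0)%E -> `|y| <= M.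
Proof.
move=> fP lsc_f rqc_f alpha_gt0 Xf Xx0 cone0; apply: contrapT.
move=> /unbounded_sublevels_escape[d [us [ys [d_neq0 us0 ys_oo ysd ys_sub]]]].
have Kd : Kq f d.
  apply: (escaping_direction_Kq fP lsc_f rqc_f alpha_gt0 (Xf _ Xx0) _ us0 ys_oo ysd)
    => // k; [exact: Xf (proj1 (ys_sub k)) | exact: proj2 (ys_sub k)].
have Cd : asymptotic_cone X d.
  by exists (fun k => `|ys k|), ys; split => //; split => // k; case: (ys_sub k).
have : (asymptotic_cone X `&` Kq f) d by [].
by rewrite cone0 => /= d0; rewrite d0 eqxx in d_neq0.
Qed.

Lemma Sol0_of_cluster {f X xb} (M : R) :
  proper_fun f -> lower_semicontinuous f -> X `<=` edom f -> X xb ->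
  (forall (e : R) B, 0 < e -> nbhs xb B ->
    exists u x, [/\ `|u| < e, Sol f X u x, `|x| <= M & B x]) ->
  Sol f X 0 xb.
Proof.
move=> fP lsc_f Xf Xxb near_Sol; split => // y Xy; rewrite !f_shift0 leNgt.
apply/negP => /lte_EFin_between[a /andP[fya afxb]].
have [B Bxb Ba] := lsc_f _ _ afxb.
rewrite (edom_fineK fP (Xf _ Xy)) lte_fin in fya.
have k_gt0 : 0 < n%:R * (`|M| + `|y|) + 1 by rewrite ltr_wpDl ?mulr_ge0 ?addr_ge0.
pose e := (a - fine (f y)) / (n%:R * (`|M| + `|y|) + 1).
have e_gt0 : 0 < e by rewrite divr_gt0 // subr_gt0.
have [u [x [ue [Xx x_min] xM /Ba]]] := near_Sol e B e_gt0 Bxb.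
rewrite (edom_fineK fP (Xf _ Xx)) lte_fin => afx.
have fx := Xf _ Xx; have fy := Xf _ Xy.
have := x_min y Xy; rewrite !f_shift_fineK // lee_fin.
have ek : e * (n%:R * (`|M| + `|y|) + 1) = a - fine (f y) by rewrite divfK ?gt_eqF.
have xy_le : `|x - y| <= `|M| + `|y|.
  by rewrite (le_trans (ler_normB _ _)) // lerD2r (le_trans xM) ?ler_norm.
have uxy : n%:R * (`|u| * `|x - y|) <= n%:R * (e * (`|M| + `|y|)).
  by rewrite ler_wpM2l // ler_pM // ltW.
have := ler_normlW (normr_dotv_le u (x - y)); rewrite dotvBr; nra.
Qed.

Lemma usc_Sol_of_bound {f X x0} {delta M : R} :
  proper_fun f -> lower_semicontinuous f -> closed X -> X `<=` edom f ->
  Sol f X 0 = [set x0] -> 0 < delta ->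
  (forall u y, `|u| < delta -> X y ->
    (f_shift f u y <= f_shift f u x0)%E -> `|y| <= M) ->
  usc_map (Sol f X) 0.
Proof.
move=> fP lsc_f cX Xf Sol0 delta_gt0 bound V oV Sol0V.
have Xx0 : X x0 by have [] : Sol f X 0 x0 by rewrite Sol0.
have Sol_le (u x : vec) : `|u| < delta -> Sol f X u x -> `|x| <= M.
  by move=> ud [Xx x_min]; apply: (bound u) => //; exact: x_min.
(* Otherwise solutions outside V exist for arbitrarily small u; they lie in a
   compact set, and a cluster point solves the unperturbed problem. *)
apply: contrapT => not_usc.
pose D e := [set x | exists u, [/\ `|u| < Num.min e delta, Sol f X u x & ~ V x]].
pose K := X `&` ([set y | `|y| <= M] `&` ~` V).
have cK : compact K.
  apply: bounded_closed_compact; first by apply: (normr_le_bounded_set M) => x [_ []].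
  apply: closedI => //.
  by apply: closedI; [exact: closed_normr_le | exact: open_closedC].
have Dmono (i j : R) : 0 < i -> 0 < j -> i <= j -> D i `<=` D j.
  move=> _ _ ij x [u [ui Sux nVx]]; exists u; split => //.
  by rewrite (lt_le_trans ui) // le_min !ge_min lexx ij orbT.
have Dne (i : R) : 0 < i -> D i !=set0.
  move=> i_gt0; apply: contrapT => noD; apply: not_usc.
  exists (ball (0 : vec) (Num.min i delta)).
    by apply: nbhsx_ballx; rewrite lt_min i_gt0.
  move=> u ui x Sux; apply: contrapT => nVx; apply: noD; exists x, u; split => //.
  by rewrite -ball_normE /= sub0r normrN in ui.
have DK (i : R) : 0 < i -> D i `<=` K.
  move=> _ x [u [ui Sux nVx]]; split; first exact: Sux.1.
  by split => //; apply: Sol_le Sux; rewrite (lt_le_trans ui) // ge_min lexx orbT.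
have [xb [Xxb [_ nVxb]] clu] := compact_directed_cluster_gt0 cK Dmono Dne DK.
have : Sol f X 0 xb.
  apply: (Sol0_of_cluster M) => // e B e_gt0 Bxb.
  have [x [[u [ue Sux nVx]] Bx]] := clu _ _ e_gt0 Bxb.
  have ud : `|u| < delta by rewrite (lt_le_trans ue) // ge_min lexx orbT.
  exists u, x; split => //; last exact: Sol_le ud Sux.
  by rewrite (lt_le_trans ue) // ge_min lexx.
by rewrite Sol0 => /= xb_x0; apply: nVxb; apply: Sol0V; rewrite Sol0 xb_x0.
Qed.

Lemma Sol_nonempty_of_bounded {f X x0 u} {M : R} :
  proper_fun f -> lower_semicontinuous f -> closed X -> X `<=` edom f -> X x0 ->
  (forall y, X y -> (f_shift f u y <= f_shift f u x0)%E -> `|y| <= M) ->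
  Sol f X u !=set0.
Proof.
move=> fP lsc_f cX Xf Xx0 bound.
have lsc_fu := lower_semicontinuous_f_shift u lsc_f.
pose K := X `&` [set y | (f_shift f u y <= f_shift f u x0)%E].
have cK : compact K.
  apply: bounded_closed_compact.
    by apply: (normr_le_bounded_set M) => y [Xy]; exact: bound.
  apply: closedI => //; rewrite (f_shift_fineK u fP (Xf _ Xx0)).
  exact: lower_semicontinuous_closed_le.
have [x [Xx x_sub] x_min] := lower_semicontinuous_compact_argmin cK
  (ex_intro _ x0 (conj Xx0 (lexx _))) lsc_fu.
exists x; split => // y Xy.
have [y_sub|y_nsub] := pselect (f_shift f u y <= f_shift f u x0)%E.
  exact: x_min.
by rewrite (le_trans x_sub) // ltW // ltNge; apply/negP.
Qed.

Lemma usc_singleton_lsc (F : vec -> set vec) (u0 x0 : vec) :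
  F u0 = [set x0] -> usc_map F u0 -> (\forall u \near u0, F u !=set0) -> lsc_map F u0.
Proof.
move=> F0 uscF Fne; split; first by rewrite F0; exists x0.
move=> V oV [x [F0x Vx]]; rewrite F0 /= in F0x; subst x.
have F0V : F u0 `<=` V by rewrite F0 => _ ->.
have [U U0 UV] := uscF V oV F0V.
exists (U `&` [set u | F u !=set0]); first exact: filterI.
by move=> u [/UV FuV [y Fuy]]; exists y; split => //; exact: FuV.
Qed.

End solution_map.

Theorem mainTheorem13 (R : realType) (n : nat) (f : 'rV[R]_n -> \bar R)
    (X : set 'rV[R]_n) (alpha : R) :
  proper_fun f ->
  lower_semicontinuous f ->
  closed X ->
  X !=set0 ->
  ~ bounded_setE (edom f `&` X) ->
  convexE X ->
  0 < alpha ->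
  robustly_quasiconvex alpha f ->
  X `<=` edom f ->
  (usc_map (Sol f X) 0 /\ lsc_map (Sol f X) 0) <->
  ((exists x0, Sol f X 0 = [set x0]) /\ asymptotic_cone X `&` Kq f = [set 0]).
Proof.
move=> fP lsc_f cX _ _ cvX alpha_gt0 rqc_f Xf; split.
  move=> [_ lsc_Sol]; have [[x0 Sx0] _] := lsc_Sol.
  split; first by exists x0; exact: lsc_Sol0_singleton.
  exact: lsc_Sol_cone lsc_Sol Sx0.
move=> [[x0 Sol0] cone0]; have Xx0 : X x0 by have [] : Sol f X 0 x0 by rewrite Sol0.
have [delta delta_gt0 [M bound]] :=
  uniform_sublevel_bound fP lsc_f rqc_f alpha_gt0 Xf Xx0 cone0.
have usc_Sol := usc_Sol_of_bound fP lsc_f cX Xf Sol0 delta_gt0 bound.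
split => //; apply: usc_singleton_lsc Sol0 usc_Sol _.
near=> u; apply: (Sol_nonempty_of_bounded fP lsc_f cX Xf Xx0) => y Xy y_sub.
by apply: (bound u) => //; near: u; exact: nbhs0_lt.
Unshelve. all: by end_near.
Qed.
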